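(* Let $K$ be a nonempty simplex in a topological vector space $F$ and let $T:K\to 2^{K}$ be a *-weakly naturally quasiconvex correspondence. Then there exists $x^*\in K$ such that $x^*\in\overline{T}(x^* )$.
   Context: A simplex is the convex hull of a finite affinely independent set. For $T:X\to 2^Y$: $\mathrm{Gr}(T)=\{(x,y):y\in T(x)\}$; $\overline{T}(x)=\{y\in Y:(x,y)\in\mathrm{cl}_{X\times Y}\mathrm{Gr}(T)\}$; for $V\subset F$, $T_V(x)=(T(x)+V)\cap Y$. $\Delta_{n-1}=\{(\lambda_1,\dots,\lambda_n)\in\mathbb{R}^n:\sum_i\lambda_i=1,\ \lambda_i\ge 0\}$. Weakly naturally quasiconvex (WNQ): let $X,Y$ be nonempty convex subsets of topological vector spaces. A correspondence $T:X\to 2^{Y}$ is weakly naturally quasiconvex if for each $n\in\mathbb{N}$ and each finite set $\{x_1,\dots,x_n\}\subset X$ there exist $y_i\in T(x_i)$ ($i=1,\dots,n$) and a bijection $g:\Delta_{n-1}\to\Delta_{n-1}$ (depending on $x_1,\dots,x_n$) of the form $g(\lambda_1,\dots,\lambda_n)=(g_1(\lambda_1),\dots,g_n(\lambda_n))$, where each $g_i:[0,1]\to[0,1]$ is continuous with $g_i(0)=0$ and $g_i(1)=1$, such that for every $(\lambda_1,\dots,\lambda_n)\in\Delta_{n-1}$ we have $\sum_{i=1}^n g_i(\lambda_i)y_i\in T\big(\sum_{i=1}^n\lambda_i x_i\big)$. *-weakly naturally quasiconvex: $T:X\to 2^Y$, $Y\subset F$, is *-weakly naturally quasiconvex if for each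 neighborhood $V$ of the origin in $F$ the correspondence $T_V$ is weakly naturally quasiconvex. *)

From Stdlib Require Import Reals.
Open Scope R_scope.
Set Implicit Arguments.

(** No Hausdorff axiom. *)
Structure TVS : Type := {
  vcar :> Type;
  vzero : vcar;
  vadd : vcar -> vcar -> vcar;
  vopp : vcar -> vcar;
  vscal : R -> vcar -> vcar;
  vadd_assoc : forall x y z, vadd x (vadd y z) = vadd (vadd x y) z;
  vadd_comm : forall x y, vadd x y = vadd y x;
  vadd_zero : forall x, vadd x vzero = x;
  vadd_opp : forall x, vadd x (vopp x) = vzero;
  vscal_one : forall x, vscal 1 x = x;
  vscal_assoc : forall a b x, vscal a (vscal b x) = vscal (a * b) x;
  vscal_distr_v : forall a x y, vscal a (vadd x y) = vadd (vscal a x) (vscal a y);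
  vscal_distr_r : forall a b x, vscal (a + b) x = vadd (vscal a x) (vscal b x);
  vopen : (vcar -> Prop) -> Prop;
  vopen_full : vopen (fun _ => True);
  vopen_inter : forall U W, vopen U -> vopen W -> vopen (fun x => U x /\ W x);
  vopen_union : forall (I : Type) (U : I -> vcar -> Prop),
      (forall i, vopen (U i)) -> vopen (fun x => exists i, U i x);
  vadd_cont : forall x y (U : vcar -> Prop), vopen U -> U (vadd x y) ->
      exists V W, vopen V /\ V x /\ vopen W /\ W y /\
        forall x' y', V x' -> W y' -> U (vadd x' y');
  vscal_cont : forall t x (U : vcar -> Prop), vopen U -> U (vscal t x) ->
      exists d V, 0 < d /\ vopen V /\ V x /\
        forall t' x', Rabs (t' - t) < d -> V x' -> U (vscal t' x')
}.

Arguments vzero {_}.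
Arguments vadd {_}.
Arguments vopp {_}.
Arguments vscal {_}.
Arguments vopen {_}.

Fixpoint vsum {F : TVS} (n : nat) (f : nat -> F) : F :=
  match n with
  | O => vzero
  | S m => vadd (vsum m f) (f m)
  end.

Fixpoint rsum (n : nat) (f : nat -> R) : R :=
  match n with
  | O => 0
  | S m => rsum m f + f m
  end.

(** lam in Delta_{n-1} (coordinates indexed by 0..n-1). *)
Definition in_simplex_std (n : nat) (lam : nat -> R) : Prop :=
  (forall i, (i < n)%nat -> 0 <= lam i) /\ rsum n lam = 1.

Definition aff_indep {F : TVS} (n : nat) (a : nat -> F) : Prop :=
  forall c : nat -> R, rsum n c = 0 ->
    vsum n (fun i => vscal (c i) (a i)) = vzero ->
    forall i, (i < n)%nat -> c i = 0.

Definition is_simplex {F : TVS} (K : F -> Prop) : Prop :=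
  exists (n : nat) (a : nat -> F), aff_indep n a /\
    forall x, K x <-> exists lam, in_simplex_std n lam /\
                         x = vsum n (fun i => vscal (lam i) (a i)).

(** Correspondences T : X -> 2^Y are represented by T : F -> F -> Prop,
    where "T x y" means y \in T(x); only x \in X matters. *)

Definition T_V {F : TVS} (Y : F -> Prop) (T : F -> F -> Prop) (V : F -> Prop)
  : F -> F -> Prop :=
  fun x y => Y y /\ exists t v, T x t /\ V v /\ y = vadd t v.

Definition WNQ {F : TVS} (X Y : F -> Prop) (T : F -> F -> Prop) : Prop :=
  forall (n : nat) (x : nat -> F),
    (1 <= n)%nat ->
    (forall i, (i < n)%nat -> X (x i)) ->
    (forall i j, (i < n)%nat -> (j < n)%nat -> x i = x j -> i = j) ->
    exists (y : nat -> F) (g : nat -> R -> R),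
      (forall i, (i < n)%nat -> T (x i) (y i)) /\
      (forall i, (i < n)%nat ->
         (forall s, 0 <= s <= 1 -> 0 <= g i s <= 1) /\
         (forall s, 0 <= s <= 1 -> forall eps, 0 < eps -> exists d, 0 < d /\
            forall s', 0 <= s' <= 1 -> Rabs (s' - s) < d ->
              Rabs (g i s' - g i s) < eps) /\
         g i 0 = 0 /\ g i 1 = 1) /\
      (forall lam, in_simplex_std n lam -> in_simplex_std n (fun i => g i (lam i))) /\
      (forall lam mu, in_simplex_std n lam -> in_simplex_std n mu ->
         (forall i, (i < n)%nat -> g i (lam i) = g i (mu i)) ->
         forall i, (i < n)%nat -> lam i = mu i) /\
      (forall mu, in_simplex_std n mu -> exists lam, in_simplex_std n lam /\
         forall i, (i < n)%nat -> g i (lam i) = mu i) /\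
      (forall lam, in_simplex_std n lam ->
         T (vsum n (fun i => vscal (lam i) (x i)))
           (vsum n (fun i => vscal (g i (lam i)) (y i)))).

Definition nbhd0 {F : TVS} (V : F -> Prop) : Prop :=
  exists U, vopen U /\ U vzero /\ forall z, U z -> V z.

Definition star_WNQ {F : TVS} (X Y : F -> Prop) (T : F -> F -> Prop) : Prop :=
  forall V, nbhd0 V -> WNQ X Y (T_V Y T V).

(** (x,y) lies in the closure, in X x Y (subspace of the product topology),
    of Gr(T) = {(x,y) : x \in X, y \in T(x)}; i.e. y \in closure-T(x). *)
Definition in_closure_graph {F : TVS} (X Y : F -> Prop) (T : F -> F -> Prop)
  (x y : F) : Prop :=
  X x /\ Y y /\
  forall U W, vopen U -> U x -> vopen W -> W y ->
    exists x' y', X x' /\ T x' y' /\ U x' /\ W y'.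

(** 1. Approximate fixed points.  Fix a neighbourhood V of 0 and apply the
       weak natural quasiconvexity of T_V to the vertices a_i (together
       with the midpoint of a_0 a_1 when N >= 2, so that at least three
       points are used).  For three or more points the separable
       bijections g of the standard simplex are forced to be the identity,
       so T_V(p(lam)) contains sum_i lam_i y_i, where y_i = p(q_i) in
       T_V(a_i) and p is the barycentric map.  Choosing for lam a
       stationary distribution of the stochastic matrix (q_i)_i makes
       sum_i lam_i y_i = p(lam): thus p(lam) lies in T(p(lam)) + V.
    2. Compactness.  If no closure-fixed point existed, every point of the
       simplex would have a neighbourhood of coordinates on which a single
       neighbourhood O of 0 separates p(mu) from T(p(mu)) + O.  Compactness
       of the cube [0,1]^N (Heine-Borel, from Coquelicot) makes one O work
       on the whole simplex, contradicting step 1 for V = O. *)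

From Stdlib Require Import Reals Lra Lia Classical IndefiniteDescription List.
From Coquelicot Require Import Rcomplements Compactness.
Open Scope R_scope.

Arguments vadd_assoc {_}. Arguments vadd_comm {_}. Arguments vadd_zero {_}.
Arguments vadd_opp {_}. Arguments vscal_one {_}. Arguments vscal_assoc {_}.
Arguments vscal_distr_v {_}. Arguments vscal_distr_r {_}. Arguments vopen_full {_}.
Arguments vopen_inter {_}. Arguments vadd_cont {_}. Arguments vscal_cont {_}.

Lemma vadd_0l {F : TVS} (x : F) : vadd vzero x = x.
Proof. rewrite vadd_comm; apply vadd_zero. Qed.

Lemma vadd_idem_zero {F : TVS} (z : F) : z = vadd z z -> z = vzero.
Proof.
  intro H.
  assert (H0 : vadd z (vopp z) = vadd (vadd z z) (vopp z)) by (rewrite <- H; reflexivity).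
  rewrite <- vadd_assoc, !vadd_opp, vadd_zero in H0. symmetry; exact H0.
Qed.

Lemma vscal_0l {F : TVS} (x : F) : vscal 0 x = vzero.
Proof. apply vadd_idem_zero. rewrite <- vscal_distr_r, Rplus_0_r. reflexivity. Qed.

Lemma vscal_0r {F : TVS} (c : R) : vscal c (@vzero F) = vzero.
Proof. apply vadd_idem_zero. rewrite <- vscal_distr_v, vadd_zero. reflexivity. Qed.

Lemma vopp_unique {F : TVS} (x y : F) : vadd x y = vzero -> y = vopp x.
Proof.
  intro H. rewrite <- (vadd_zero y), <- (vadd_opp x), vadd_assoc, (vadd_comm y x), H.
  apply vadd_0l.
Qed.

Lemma vopp_scal {F : TVS} (x : F) : vopp x = vscal (-1) x.
Proof.
  symmetry. apply vopp_unique. rewrite <- (vscal_one x) at 1.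
  rewrite <- vscal_distr_r. replace (1 + -1) with 0 by ring. apply vscal_0l.
Qed.

Lemma vadd_solve_l {F : TVS} (y t v : F) : y = vadd t v -> t = vadd y (vscal (-1) v).
Proof. intro H. rewrite H, <- vopp_scal, <- vadd_assoc, vadd_opp, vadd_zero. reflexivity. Qed.

Lemma vadd_swap4 {F : TVS} (a b c d : F) :
  vadd (vadd a b) (vadd c d) = vadd (vadd a c) (vadd b d).
Proof. rewrite <- !vadd_assoc. f_equal. rewrite !vadd_assoc. f_equal. apply vadd_comm. Qed.

(** Points near x, shifted by small vectors, stay in a given neighbourhood
    of x: this is joint continuity of (x', v) |-> x' - v at (x, 0). *)
Lemma shifted_nbhd {F : TVS} (x : F) (W : F -> Prop) :
  vopen W -> W x ->
  exists A O, vopen A /\ A x /\ vopen O /\ O vzero /\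
    forall x' v, A x' -> O v -> W (vadd x' (vscal (-1) v)).
Proof.
  intros HW Wx. rewrite <- (vadd_zero x) in Wx.
  destruct (vadd_cont _ _ _ HW Wx) as [A [B [HA [Ax [HB [B0 HAB]]]]]].
  rewrite <- (vscal_0r (-1)) in B0.
  destruct (vscal_cont _ _ _ HB B0) as [d [O [Hd [HO [O0 Hsc]]]]].
  exists A, O. repeat split; auto.
  intros x' v Ax' Ov. apply HAB; auto. apply Hsc; auto.
  replace (-1 - -1) with 0 by ring. rewrite Rabs_R0. exact Hd.
Qed.

Lemma vsum_ext {F : TVS} n (f g : nat -> F) :
  (forall i, (i < n)%nat -> f i = g i) -> vsum n f = vsum n g.
Proof.
  induction n; intro H; simpl; [reflexivity|].
  rewrite IHn by (intros; apply H; lia). rewrite H by lia. reflexivity.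
Qed.

Lemma vsum_add {F : TVS} n (f g : nat -> F) :
  vsum n (fun i => vadd (f i) (g i)) = vadd (vsum n f) (vsum n g).
Proof. induction n; simpl. - rewrite vadd_zero; reflexivity. - rewrite IHn. apply vadd_swap4. Qed.

Lemma vsum_scal {F : TVS} n c (f : nat -> F) :
  vscal c (vsum n f) = vsum n (fun i => vscal c (f i)).
Proof. induction n; simpl. - apply vscal_0r. - rewrite vscal_distr_v, IHn. reflexivity. Qed.

Lemma vsum_zero {F : TVS} n : vsum n (fun _ => @vzero F) = vzero.
Proof. induction n; simpl; [reflexivity|]. rewrite IHn, vadd_zero. reflexivity. Qed.

Lemma vsum_single {F : TVS} n i (a : nat -> F) : (i < n)%nat ->
  vsum n (fun j => vscal (if Nat.eqb j i then 1 else 0) (a j)) = a i.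
Proof.
  induction n; intro Hi; [lia|]. simpl.
  destruct (Nat.eqb_spec n i).
  - subst. rewrite (vsum_ext _ _ (fun _ => vzero)), vsum_zero, vadd_0l, vscal_one; [reflexivity|].
    intros j Hj. destruct (Nat.eqb_spec j i); [lia|]. apply vscal_0l.
  - rewrite IHn by lia. rewrite vscal_0l, vadd_zero. reflexivity.
Qed.

Lemma vsum_trunc {F : TVS} N n (f : nat -> F) :
  (N <= n)%nat -> (forall i, (N <= i < n)%nat -> f i = vzero) -> vsum n f = vsum N f.
Proof.
  induction n; intros HNn Hf; [replace N with 0%nat by lia; reflexivity|].
  destruct (Nat.eq_dec N (S n)) as [->|HN]; [reflexivity|].
  simpl. rewrite Hf, vadd_zero by lia. apply IHn; [lia | intros; apply Hf; lia].
Qed.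

Lemma vsum_swap {F : TVS} N M (c : nat -> R) (d : nat -> nat -> R) (a : nat -> F) :
  vsum N (fun i => vscal (c i) (vsum M (fun j => vscal (d i j) (a j)))) =
  vsum M (fun j => vscal (rsum N (fun i => c i * d i j)) (a j)).
Proof.
  induction N; simpl.
  - rewrite (vsum_ext _ _ (fun _ => vzero)); [symmetry; apply vsum_zero|].
    intros; apply vscal_0l.
  - rewrite IHN, vsum_scal, <- vsum_add. apply vsum_ext. intros j _.
    rewrite vscal_assoc, <- vscal_distr_r. reflexivity.
Qed.

Lemma rsum_ext n f g : (forall i, (i < n)%nat -> f i = g i) -> rsum n f = rsum n g.
Proof.
  induction n; intro H; simpl; [reflexivity|].
  rewrite IHn by (intros; apply H; lia). rewrite H by lia. reflexivity.
Qed.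

Lemma rsum_plus n f g : rsum n (fun i => f i + g i) = rsum n f + rsum n g.
Proof. induction n; simpl; [ring|]. rewrite IHn. ring. Qed.

Lemma rsum_scal n c f : rsum n (fun i => c * f i) = c * rsum n f.
Proof. induction n; simpl; [ring|]. rewrite IHn. ring. Qed.

Lemma rsum_nonneg n f : (forall i, (i < n)%nat -> 0 <= f i) -> 0 <= rsum n f.
Proof.
  induction n; intro H; simpl; [lra|].
  assert (0 <= rsum n f) by (apply IHn; intros; apply H; lia).
  assert (0 <= f n) by (apply H; lia). lra.
Qed.

Lemma rsum_ge_term n f i : (forall i, (i < n)%nat -> 0 <= f i) -> (i < n)%nat ->
  f i <= rsum n f.
Proof.
  induction n; intros H Hi; [lia|]. simpl.
  assert (0 <= f n) by (apply H; lia).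
  destruct (Nat.eq_dec i n).
  - subst. assert (0 <= rsum n f) by (apply rsum_nonneg; intros; apply H; lia). lra.
  - assert (f i <= rsum n f) by (apply IHn; [intros; apply H; lia | lia]). lra.
Qed.

Lemma rsum_zero_all n f : (forall i, (i < n)%nat -> 0 <= f i) -> rsum n f = 0 ->
  forall i, (i < n)%nat -> f i = 0.
Proof. intros H H0 i Hi. pose proof (rsum_ge_term n f i H Hi). pose proof (H i Hi). lra. Qed.

Lemma rsum_single n i A : (i < n)%nat -> rsum n (fun m => if Nat.eqb m i then A else 0) = A.
Proof.
  induction n; intro Hi; [lia|]. simpl.
  destruct (Nat.eqb_spec n i).
  - subst. rewrite (rsum_ext _ _ (fun _ => 0)).
    + clear. induction i; simpl; lra.
    + intros j Hj. destruct (Nat.eqb_spec j i); [lia|reflexivity].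
  - rewrite IHn by lia. ring.
Qed.

Lemma rsum_trunc N n f :
  (N <= n)%nat -> (forall i, (N <= i < n)%nat -> f i = 0) -> rsum n f = rsum N f.
Proof.
  induction n; intros HNn Hf; [replace N with 0%nat by lia; reflexivity|].
  destruct (Nat.eq_dec N (S n)) as [->|HN]; [reflexivity|].
  simpl. rewrite Hf, Rplus_0_r by lia. apply IHn; [lia | intros; apply Hf; lia].
Qed.

Lemma rsum_close n (lam mu : nat -> R) r :
  (forall i, (i < n)%nat -> Rabs (mu i - lam i) < r) ->
  Rabs (rsum n mu - rsum n lam) <= INR n * r.
Proof.
  induction n; intro H; cbn [rsum].
  - rewrite Rminus_0_r, Rabs_R0. simpl. lra.
  - replace (rsum n mu + mu n - (rsum n lam + lam n)) with
      ((rsum n mu - rsum n lam) + (mu n - lam n)) by ring.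
    eapply Rle_trans; [apply Rabs_triang|].
    assert (Rabs (rsum n mu - rsum n lam) <= INR n * r) by (apply IHn; intros; apply H; lia).
    assert (Rabs (mu n - lam n) < r) by (apply H; lia).
    rewrite S_INR. lra.
Qed.

Lemma simplex_coord_le1 n lam i : in_simplex_std n lam -> (i < n)%nat -> 0 <= lam i <= 1.
Proof.
  intros [H0 H1] Hi. split; [auto|]. rewrite <- H1. apply rsum_ge_term; auto.
Qed.

(** ** Stationary distributions of stochastic matrices

    The proof is by
    elimination of the last state: if it is absorbing it carries a
    stationary distribution by itself; otherwise the chain observed only on
    the remaining states (the censored chain) is stochastic, and a
    stationary distribution of it lifts to one of the original chain. *)

Definition stochastic (n : nat) (Q : nat -> nat -> R) : Prop :=
  (forall i j, (i < n)%nat -> (j < n)%nat -> 0 <= Q i j) /\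
  (forall i, (i < n)%nat -> rsum n (Q i) = 1).

Definition stationary (n : nat) (Q : nat -> nat -> R) (lam : nat -> R) : Prop :=
  in_simplex_std n lam /\ forall j, (j < n)%nat -> lam j = rsum n (fun i => lam i * Q i j).

(** Transition probabilities of the chain on 0..m-1 obtained by skipping
    the visits to state m. *)
Definition censored (m : nat) (Q : nat -> nat -> R) (i j : nat) : R :=
  Q i j + Q i m / (1 - Q m m) * Q m j.

(** Lift of a distribution of the censored chain: state m receives the
    mass flowing into it, and everything is renormalised. *)
Definition uncensored (m : nat) (Q : nat -> nat -> R) (lam : nat -> R) (j : nat) : R :=
  let w := rsum m (fun i => lam i * Q i m) / (1 - Q m m) in
  (if Nat.eqb j m then w else lam j) / (1 + w).

Section LastState.
Variables (m : nat) (Q : nat -> nat -> R).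
Hypothesis HQ : stochastic (S m) Q.

Lemma last_row_sum : rsum m (Q m) = 1 - Q m m.
Proof. pose proof (proj2 HQ m ltac:(lia)) as H. simpl in H. lra. Qed.

Lemma absorbing_stationary :
  Q m m = 1 -> stationary (S m) Q (fun i => if Nat.eqb i m then 1 else 0).
Proof.
  intro Habs.
  assert (Hz : forall j, (j < m)%nat -> Q m j = 0).
  { apply rsum_zero_all; [intros; apply HQ; lia|]. rewrite last_row_sum. lra. }
  split; [split|].
  - intros i _. destruct (Nat.eqb i m); lra.
  - apply rsum_single; lia.
  - intros j Hj.
    rewrite (rsum_ext _ _ (fun i => if Nat.eqb i m then Q m j else 0)).
    2:{ intros i _. destruct (Nat.eqb_spec i m); subst; ring. }
    rewrite rsum_single by lia.
    destruct (Nat.eqb_spec j m); [subst; lra|]. rewrite Hz by lia. reflexivity.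
Qed.

Hypothesis Hleave : Q m m < 1.

Lemma censored_stochastic : stochastic m (censored m Q).
Proof.
  destruct HQ as [Hnn Hrow]. split.
  - intros i j Hi Hj. unfold censored.
    assert (0 <= Q i j) by (apply Hnn; lia).
    assert (0 <= Q m j) by (apply Hnn; lia).
    assert (0 <= Q i m / (1 - Q m m)).
    { apply Rdiv_le_0_compat; [apply Hnn; lia | lra]. }
    nra.
  - intros i Hi. unfold censored. rewrite rsum_plus, rsum_scal, last_row_sum.
    pose proof (Hrow i ltac:(lia)) as H. simpl in H.
    field_simplify; lra.
Qed.

Lemma stationary_uncensor lam :
  stationary m (censored m Q) lam -> stationary (S m) Q (uncensored m Q lam).
Proof.
  intros [[Hl0 Hl1] Hfix]. destruct HQ as [Hnn _].
  set (c := 1 - Q m m). assert (Hc : 0 < c) by (unfold c; lra).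
  set (w := rsum m (fun i => lam i * Q i m) / c).
  assert (Hw : 0 <= w).
  { apply Rdiv_le_0_compat; [|lra]. apply rsum_nonneg.
    intros i Hi. assert (0 <= Q i m) by (apply Hnn; lia). pose proof (Hl0 i Hi). nra. }
  assert (Hin : rsum m (fun i => lam i * Q i m) = w * c) by (unfold w; field; lra).
  assert (Hsplit : forall f, rsum (S m) (fun i => uncensored m Q lam i * f i)
                             = / (1 + w) * (rsum m (fun i => lam i * f i) + w * f m)).
  { intro f. cbn [rsum]. unfold uncensored. fold c w. rewrite Nat.eqb_refl.
    rewrite (rsum_ext m _ (fun i => / (1 + w) * (lam i * f i))), rsum_scal.
    - field. lra.
    - intros i Hi. destruct (Nat.eqb_spec i m); [lia|]. unfold Rdiv; ring. }
  split; [split|].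
  - intros i Hi. unfold uncensored. fold c w.
    apply Rdiv_le_0_compat; [|lra]. destruct (Nat.eqb_spec i m); [lra | apply Hl0; lia].
  - rewrite (rsum_ext _ _ (fun i => uncensored m Q lam i * 1)) by (intros; ring).
    rewrite Hsplit, (rsum_ext _ _ lam), Hl1 by (intros; ring). field. lra.
  - intros j Hj. rewrite Hsplit. unfold uncensored. fold c w.
    destruct (Nat.eqb_spec j m).
    + subst j. rewrite Hin. unfold c. field. lra.
    + rewrite (Hfix j) by lia. unfold censored. fold c.
      rewrite (rsum_ext _ _ (fun i => lam i * Q i j + Q m j / c * (lam i * Q i m))),
        rsum_plus, rsum_scal, Hin by (intros; unfold Rdiv; ring).
      field. lra.
Qed.

End LastState.

Theorem stationary_exists n Q : (0 < n)%nat -> stochastic n Q -> exists lam, stationary n Q lam.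
Proof.
  intro Hn. destruct n as [|n]; [lia|]. clear Hn.
  revert Q. induction n; intros Q HQ.
  - exists (fun _ => 1). split; [split; [intros; lra | simpl; lra]|].
    intros j Hj. assert (j = 0%nat) by lia. subst.
    pose proof (proj2 HQ 0%nat ltac:(lia)). simpl in *. lra.
  - assert (Hmm : Q (S n) (S n) <= 1).
    { rewrite <- (proj2 HQ (S n) ltac:(lia)). apply rsum_ge_term; [|lia].
      intros; apply HQ; lia. }
    destruct (Req_dec (Q (S n) (S n)) 1) as [Habs|Hne].
    + exists (fun i => if Nat.eqb i (S n) then 1 else 0). apply absorbing_stationary; auto.
    + destruct (IHn (censored (S n) Q)) as [lam Hlam].
      { apply censored_stochastic; auto; lra. }
      exists (uncensored (S n) Q lam). apply stationary_uncensor; auto; lra.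
Qed.

(** ** Separable self-maps of the standard simplex

    If g = (g_0,...,g_(n-1)) acts coordinatewise, fixes 0 in each
    coordinate and maps Delta_(n-1) into itself, then for n >= 3 every g_i
    is the identity on [0,1]: testing g on points with three nonzero
    coordinates shows that all g_i coincide and are additive, and a
    nonnegative additive map with g(1) = 1 is the identity. *)

Section AdditiveMap.
Variable phi : R -> R.
Hypothesis phi_nonneg : forall s, 0 <= s <= 1 -> 0 <= phi s.
Hypothesis phi_one : phi 1 = 1.
Hypothesis phi_add : forall s t, 0 <= s -> 0 <= t -> s + t <= 1 -> phi (s + t) = phi s + phi t.

Lemma additive_monotone s t : 0 <= s -> s <= t -> t <= 1 -> phi s <= phi t.
Proof.
  intros. replace t with (s + (t - s)) by ring. rewrite phi_add by lra.
  assert (0 <= phi (t - s)) by (apply phi_nonneg; lra). lra.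
Qed.

Lemma additive_nat_multiple (k : nat) h : 0 <= h -> INR k * h <= 1 -> phi (INR k * h) = INR k * phi h.
Proof.
  induction k; intros Hh Hk.
  - simpl. rewrite Rmult_0_l.
    assert (H := phi_add 0 0 ltac:(lra) ltac:(lra) ltac:(lra)). rewrite Rplus_0_r in H. lra.
  - rewrite S_INR in *. pose proof (pos_INR k).
    replace ((INR k + 1) * h) with (INR k * h + h) by ring.
    rewrite phi_add, IHk by nra. ring.
Qed.

Lemma additive_on_grid (k m : nat) : (0 < m)%nat -> (k <= m)%nat ->
  phi (INR k * / INR m) = INR k * / INR m.
Proof.
  intros Hm Hkm. pose proof (lt_0_INR _ Hm) as Hm0. pose proof (le_INR _ _ Hkm).
  pose proof (pos_INR k).
  assert (Hunit : phi (/ INR m) = / INR m).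
  { pose proof (additive_nat_multiple m (/ INR m)) as Hmul.
    rewrite Rinv_r, phi_one in Hmul by lra.
    assert (Hprod : 1 = INR m * phi (/ INR m)).
    { apply Hmul; [left; apply Rinv_0_lt_compat |]; lra. }
    apply (Rmult_eq_reg_l (INR m)); [|lra]. rewrite <- Hprod. field. lra. }
  rewrite additive_nat_multiple, Hunit; [reflexivity | |].
  - left; apply Rinv_0_lt_compat; lra.
  - apply (Rmult_le_reg_r (INR m)); [lra|]. field_simplify; lra.
Qed.

Lemma additive_lower_bound (m : nat) s : (0 < m)%nat -> 0 <= s <= 1 -> s - / INR m <= phi s.
Proof.
  intros Hm Hs. pose proof (lt_0_INR _ Hm).
  destruct (nfloor_ex (s * INR m)) as [k [Hk1 Hk2]]; [nra|].
  assert (Hkm : (k <= m)%nat).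
  { apply INR_le. nra. }
  assert (Hgrid : INR k * / INR m <= s).
  { apply (Rmult_le_reg_r (INR m)); [lra|]. field_simplify; lra. }
  pose proof (pos_INR k).
  pose proof (additive_monotone (INR k * / INR m) s ltac:(apply Rmult_le_pos;
    [lra | left; apply Rinv_0_lt_compat; lra]) Hgrid ltac:(lra)).
  rewrite additive_on_grid in H1 by lia.
  assert (s - / INR m <= INR k * / INR m); [|lra].
  apply (Rmult_le_reg_r (INR m)); [lra|]. field_simplify; lra.
Qed.

Lemma additive_identity s : 0 <= s <= 1 -> phi s = s.
Proof.
  intros Hs.
  assert (Hclose : forall m : nat, (0 < m)%nat -> Rabs (phi s - s) <= / INR m).
  { intros m Hm. pose proof (additive_lower_bound m s Hm Hs).
    pose proof (additive_lower_bound m (1 - s) Hm ltac:(lra)).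
    assert (phi s + phi (1 - s) = 1).
    { rewrite <- phi_add by lra. replace (s + (1 - s)) with 1 by ring. exact phi_one. }
    apply Rabs_le. lra. }
  destruct (Req_dec (phi s) s) as [E|E]; [exact E|]. exfalso.
  assert (He : 0 < Rabs (phi s - s)) by (apply Rabs_pos_lt; lra).
  destruct (archimed_cor1 _ He) as [m [Hm Hm0]].
  pose proof (Hclose m Hm0). lra.
Qed.

End AdditiveMap.

Definition three_point (i j k : nat) (s t u : R) : nat -> R :=
  fun l => if Nat.eqb l i then s else if Nat.eqb l j then t else if Nat.eqb l k then u else 0.

Lemma three_point_sum n i j k s t u f : (i < n)%nat -> (j < n)%nat -> (k < n)%nat ->
  i <> j -> i <> k -> j <> k -> (forall l, (l < n)%nat -> f l = three_point i j k s t u l) ->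
  rsum n f = s + t + u.
Proof.
  intros Hi Hj Hk Hij Hik Hjk H.
  rewrite (rsum_ext _ _ (fun l => (if Nat.eqb l i then s else 0) + (if Nat.eqb l j then t else 0)
                                  + (if Nat.eqb l k then u else 0))).
  - rewrite !rsum_plus, !rsum_single by auto. reflexivity.
  - intros l Hl. rewrite H by auto. unfold three_point.
    destruct (Nat.eqb_spec l i), (Nat.eqb_spec l j), (Nat.eqb_spec l k); subst; try lia; ring.
Qed.

Section SimplexMaps.
Variables (n : nat) (g : nat -> R -> R).
Hypothesis g_zero : forall i, (i < n)%nat -> g i 0 = 0.
Hypothesis g_simplex :
  forall lam, in_simplex_std n lam -> in_simplex_std n (fun i => g i (lam i)).
Variables i j k : nat.
Hypotheses (Hi : (i < n)%nat) (Hj : (j < n)%nat) (Hk : (k < n)%nat).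
Hypotheses (Hij : i <> j) (Hik : i <> k) (Hjk : j <> k).

Lemma simplex_map_three s t u : 0 <= s -> 0 <= t -> 0 <= u -> s + t + u = 1 ->
  0 <= g i s /\ g i s + g j t + g k u = 1.
Proof.
  intros Hs Ht Hu Hsum.
  assert (Hin : in_simplex_std n (three_point i j k s t u)).
  { split.
    - intros l _. unfold three_point.
      destruct (Nat.eqb l i), (Nat.eqb l j), (Nat.eqb l k); lra.
    - rewrite <- Hsum. apply (three_point_sum n i j k); auto. }
  destruct (g_simplex _ Hin) as [Hpos Hone].
  split.
  - specialize (Hpos i Hi). unfold three_point in Hpos. rewrite Nat.eqb_refl in Hpos. exact Hpos.
  - rewrite <- Hone. symmetry. apply (three_point_sum n i j k); auto.
    intros l Hl. unfold three_point.
    destruct (Nat.eqb_spec l i), (Nat.eqb_spec l j), (Nat.eqb_spec l k); subst; try lia;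
      try rewrite g_zero by auto; reflexivity.
Qed.

End SimplexMaps.

Lemma simplex_map_identity n g :
  (3 <= n)%nat -> (forall i, (i < n)%nat -> g i 0 = 0) ->
  (forall lam, in_simplex_std n lam -> in_simplex_std n (fun i => g i (lam i))) ->
  forall i s, (i < n)%nat -> 0 <= s <= 1 -> g i s = s.
Proof.
  intros Hn H0 Hsimp i s Hi Hs.
  assert (Hjk : exists j k, (j < n)%nat /\ (k < n)%nat /\ i <> j /\ i <> k /\ j <> k).
  { destruct (Nat.eq_dec i 0); [exists 1%nat, 2%nat|].
    - repeat split; lia.
    - destruct (Nat.eq_dec i 1); [exists 0%nat, 2%nat | exists 0%nat, 1%nat]; repeat split; lia. }
  destruct Hjk as [j [k [Hj [Hk [Hij [Hik Hjk]]]]]].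
  pose proof (simplex_map_three n g H0 Hsimp) as L.
  assert (Hagree : forall t, 0 <= t <= 1 -> g j t = g i t).
  { intros t Ht.
    pose proof (L i j k Hi Hj Hk Hij Hik Hjk t 0 (1 - t) ltac:(lra) ltac:(lra) ltac:(lra) ltac:(lra)).
    pose proof (L j i k Hj Hi Hk ltac:(lia) Hjk Hik t 0 (1 - t) ltac:(lra) ltac:(lra) ltac:(lra) ltac:(lra)).
    rewrite !H0 in * by auto. lra. }
  apply (additive_identity (g i)); auto.
  - intros t Ht. apply (L i j k Hi Hj Hk Hij Hik Hjk t 0 (1 - t)); lra.
  - pose proof (L i j k Hi Hj Hk Hij Hik Hjk 1 0 0 ltac:(lra) ltac:(lra) ltac:(lra) ltac:(lra)).
    rewrite !H0 in H by auto. lra.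
  - intros t u Ht Hu Htu.
    pose proof (L i j k Hi Hj Hk Hij Hik Hjk t u (1 - t - u) Ht Hu ltac:(lra) ltac:(lra)).
    pose proof (L i j k Hi Hj Hk Hij Hik Hjk (t + u) 0 (1 - t - u) ltac:(lra) ltac:(lra) ltac:(lra) ltac:(lra)).
    rewrite Hagree in H by lra. rewrite H0 in H1 by auto. lra.
Qed.

Lemma simplex_map_fixes n g :
  (n = 1 \/ 3 <= n)%nat -> (forall i, (i < n)%nat -> g i 0 = 0 /\ g i 1 = 1) ->
  (forall lam, in_simplex_std n lam -> in_simplex_std n (fun i => g i (lam i))) ->
  forall lam, in_simplex_std n lam -> forall i, (i < n)%nat -> g i (lam i) = lam i.
Proof.
  intros [Hn|Hn] Hg Hsimp lam Hlam i Hi.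
  - subst n. assert (i = 0%nat) by lia. subst i.
    destruct Hlam as [_ Hsum]. simpl in Hsum. replace (lam 0%nat) with 1 by lra. apply Hg; lia.
  - apply (simplex_map_identity n g); auto.
    + intros; apply Hg; auto.
    + apply (simplex_coord_le1 n); auto.
Qed.

(** ** Compactness of the unit cube

    Heine-Borel for [0,1]^N in the "ideal" form used below: a property of
    sets that is inherited by subsets and finite unions, and that holds
    near every point of the cube, holds for the whole cube.  It follows
    from Coquelicot's finite-subcover theorem [compactness_list] for boxes
    in R^N, which are represented there by nested pairs [Tn N R]. *)

Definition cube (N : nat) (mu : nat -> R) : Prop := forall i, (i < N)%nat -> 0 <= mu i <= 1.

Definition ballN (N : nat) (lam : nat -> R) (r : R) (mu : nat -> R) : Prop :=
  forall i, (i < N)%nat -> Rabs (mu i - lam i) < r.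

Definition set_ideal {X : Type} (G : (X -> Prop) -> Prop) : Prop :=
  G (fun _ => False) /\
  (forall A B : X -> Prop, (forall x, A x -> B x) -> G B -> G A) /\
  (forall A B, G A -> G B -> G (fun x => A x \/ B x)).

Lemma ideal_finite_union {X T : Type} (G : (X -> Prop) -> Prop) (A : T -> X -> Prop) l :
  set_ideal G -> (forall t, In t l -> G (A t)) -> G (fun x => exists t, In t l /\ A t x).
Proof.
  intros [G0 [Gsub Gunion]]. induction l as [|t l IH]; intro HA.
  - refine (Gsub _ _ _ G0). intros x [t [[] _]].
  - refine (Gsub _ _ _ (Gunion _ _ (HA t (in_eq t l))
                          (IH (fun t' Ht' => HA t' (in_cons _ _ _ Ht'))))).
    intros x [t' [[<-|Ht'] Hx]]; [left | right; exists t']; auto.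
Qed.

Fixpoint to_tuple (N : nat) (mu : nat -> R) : Tn N R :=
  match N with
  | O => tt
  | S M => (mu O, to_tuple M (fun i => mu (S i)))
  end.

Fixpoint of_tuple (N : nat) : Tn N R -> nat -> R :=
  match N with
  | O => fun _ _ => 0
  | S M => fun t i => match i with O => fst t | S i' => of_tuple M (snd t) i' end
  end.

Notation unit_box N := (bounded_n N (to_tuple N (fun _ => 0)) (to_tuple N (fun _ => 1))).

Lemma cube_to_tuple N mu : cube N mu -> unit_box N (to_tuple N mu).
Proof.
  revert mu. induction N; intros mu Hmu; simpl; [exact I|].
  split; [apply Hmu; lia|]. apply IHN. intros i Hi. apply Hmu. lia.
Qed.

Lemma unit_box_of_tuple N t : unit_box N t -> cube N (of_tuple N t).
Proof.
  revert t. induction N; intros t Ht i Hi; [lia|]. destruct t as [t0 t']. simpl in Ht.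
  destruct i; [apply Ht | apply (IHN t' (proj2 Ht)); lia].
Qed.

Lemma close_of_tuple N r mu t : close_n N r (to_tuple N mu) t -> ballN N (of_tuple N t) r mu.
Proof.
  revert mu t. induction N; intros mu t Ht i Hi; [lia|]. destruct t as [t0 t']. simpl in Ht.
  destruct i; [apply Ht | apply (IHN (fun i => mu (S i)) t' (proj2 Ht)); lia].
Qed.

Lemma cube_local_to_global N (G : ((nat -> R) -> Prop) -> Prop) :
  set_ideal G ->
  (forall lam, cube N lam -> exists r, 0 < r /\ G (fun mu => cube N mu /\ ballN N lam r mu)) ->
  G (cube N).
Proof.
  intros HG Hloc. pose proof HG as [G0 [Gsub _]].
  set (piece := fun (t : Tn N R) (r : posreal) mu =>
                  cube N (of_tuple N t) /\ cube N mu /\ ballN N (of_tuple N t) r mu).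
  assert (Hpiece : forall t, exists r : posreal, G (piece t r)).
  { intro t. destruct (classic (cube N (of_tuple N t))) as [Hc|Hc].
    - destruct (Hloc _ Hc) as [r [Hr HGr]]. exists (mkposreal r Hr).
      refine (Gsub _ _ _ HGr). intros mu [_ Hmu]. exact Hmu.
    - exists (mkposreal 1 Rlt_0_1). refine (Gsub _ _ _ G0). intros mu [Hc' _]. tauto. }
  destruct (functional_choice _ Hpiece) as [delta Hdelta].
  apply NNPP; intro Hnot.
  apply (compactness_list N (to_tuple N (fun _ => 0)) (to_tuple N (fun _ => 1)) delta).
  intros [l Hl]. apply Hnot.
  refine (Gsub _ (fun mu => exists t, In t l /\ piece t (delta t) mu) _
            (ideal_finite_union _ _ _ HG (fun t _ => Hdelta t))).
  intros mu Hmu. destruct (Hl _ (cube_to_tuple _ _ Hmu)) as [t [Hin [Hb Hclose]]].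
  exists t. split; [exact Hin|].
  split; [|split]; [apply unit_box_of_tuple | | apply close_of_tuple]; auto.
Qed.

Definition bary {F : TVS} (N : nat) (a : nat -> F) (lam : nat -> R) : F :=
  vsum N (fun i => vscal (lam i) (a i)).

Definition unit_vec (i : nat) : nat -> R := fun j => if Nat.eqb j i then 1 else 0.

Lemma unit_vec_simplex N i : (i < N)%nat -> in_simplex_std N (unit_vec i).
Proof.
  intros Hi. split; [intros j _; unfold unit_vec; destruct (Nat.eqb j i); lra|].
  apply rsum_single; auto.
Qed.

Lemma bary_unit_vec {F : TVS} N (a : nat -> F) i : (i < N)%nat -> bary N a (unit_vec i) = a i.
Proof. intros. apply vsum_single; auto. Qed.

Lemma bary_continuous {F : TVS} N (a : nat -> F) (lam : nat -> R) (O : F -> Prop) :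
  vopen O -> O (bary N a lam) ->
  exists r, 0 < r /\ forall mu, ballN N lam r mu -> O (bary N a mu).
Proof.
  unfold bary. revert O. induction N; intros O HO Hx.
  - exists 1. split; [lra|]. intros; simpl in *; auto.
  - simpl in Hx. destruct (vadd_cont _ _ _ HO Hx) as [V [W [HV [Vx [HW [Wy Hvw]]]]]].
    destruct (IHN V HV Vx) as [r1 [Hr1 H1]].
    destruct (vscal_cont _ _ _ HW Wy) as [d [V' [Hd [HV' [V'a H2]]]]].
    exists (Rmin r1 d). split; [apply Rmin_case; auto|].
    intros mu Hmu. simpl. apply Hvw.
    + apply H1. intros i Hi. eapply Rlt_le_trans; [apply Hmu; lia | apply Rmin_l].
    + apply H2; auto. eapply Rlt_le_trans; [apply Hmu; lia | apply Rmin_r].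
Qed.

Lemma bary_inj {F : TVS} N (a : nat -> F) lam mu : aff_indep N a ->
  in_simplex_std N lam -> in_simplex_std N mu -> bary N a lam = bary N a mu ->
  forall i, (i < N)%nat -> lam i = mu i.
Proof.
  intros Hind [_ Hl] [_ Hm] Hp i Hi.
  assert (lam i + -1 * mu i = 0); [|lra].
  apply (Hind (fun i => lam i + -1 * mu i)); auto.
  - rewrite rsum_plus, rsum_scal. lra.
  - rewrite (vsum_ext _ _ (fun i => vadd (vscal (lam i) (a i)) (vscal (-1) (vscal (mu i) (a i))))).
    + rewrite vsum_add, <- vsum_scal. fold (bary N a lam) (bary N a mu).
      rewrite Hp, <- vopp_scal, vadd_opp. reflexivity.
    + intros j _. rewrite vscal_distr_r, vscal_assoc. reflexivity.
Qed.

Definition midpoint01 : nat -> R :=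
  fun j => if Nat.eqb j 0 then / 2 else if Nat.eqb j 1 then / 2 else 0.

Definition with_midpoint {F : TVS} (N : nat) (a : nat -> F) (i : nat) : F :=
  if Nat.ltb i N then a i else bary N a midpoint01.

Lemma midpoint01_simplex N : (2 <= N)%nat -> in_simplex_std N midpoint01.
Proof.
  intros HN. split.
  - intros j _. unfold midpoint01. destruct (Nat.eqb j 0), (Nat.eqb j 1); lra.
  - rewrite (rsum_ext _ _ (fun j => (if Nat.eqb j 0 then / 2 else 0) + (if Nat.eqb j 1 then / 2 else 0))).
    + rewrite rsum_plus, !rsum_single by lia. lra.
    + intros j _. unfold midpoint01.
      destruct (Nat.eqb_spec j 0), (Nat.eqb_spec j 1); subst; try discriminate; lra.
Qed.

Lemma with_midpoint_distinct {F : TVS} N (a : nat -> F) : aff_indep N a -> (2 <= N)%nat ->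
  forall i j, (i < S N)%nat -> (j < S N)%nat -> with_midpoint N a i = with_midpoint N a j -> i = j.
Proof.
  intros Hind HN.
  assert (Hcoord : forall i mu, (i < N)%nat -> in_simplex_std N mu -> a i = bary N a mu -> mu i = 1).
  { intros i mu Hi Hmu E. rewrite <- (bary_unit_vec N a i Hi) in E.
    pose proof (bary_inj N a _ _ Hind (unit_vec_simplex N i Hi) Hmu E i Hi) as Hc.
    unfold unit_vec in Hc. rewrite Nat.eqb_refl in Hc. lra. }
  assert (Hmid : forall i, (i < N)%nat -> a i <> bary N a midpoint01).
  { intros i Hi E. pose proof (Hcoord i _ Hi (midpoint01_simplex N HN) E) as Hc.
    unfold midpoint01 in Hc. destruct (Nat.eqb i 0), (Nat.eqb i 1); lra. }
  intros i j Hi Hj E. unfold with_midpoint in E.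
  destruct (Nat.ltb_spec i N), (Nat.ltb_spec j N).
  - rewrite <- (bary_unit_vec N a j) in E by auto.
    pose proof (Hcoord i _ H (unit_vec_simplex N j H0) E) as Hc.
    unfold unit_vec in Hc. destruct (Nat.eqb_spec i j); [auto | lra].
  - exfalso. apply (Hmid i); auto.
  - exfalso. apply (Hmid j); auto.
  - lia.
Qed.

(** ** Approximate fixed points *)

Section ApproximateFixedPoints.
Variables (F : TVS) (N : nat) (a : nat -> F) (K : F -> Prop).
Hypothesis HK : forall x, K x <-> exists lam, in_simplex_std N lam /\ x = bary N a lam.

Lemma vertex_in_simplex i : (i < N)%nat -> K (a i).
Proof.
  intros Hi. apply HK. exists (unit_vec i).
  split; [apply unit_vec_simplex | rewrite bary_unit_vec]; auto.
Qed.

(** Let S : K -> 2^K be weakly naturally quasiconvex, and apply this to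
    n distinct points of K, the first N of which are the vertices, where
    n = 1 or n >= 3 so that the bijections g are the identity.  With
    y_i = p(q_i) in S(a_i) and lam stationary for (q_i)_i, the
    quasiconvexity condition at lam gives p(lam) in S(p(lam)). *)
Lemma configuration_fixed_point (S : F -> F -> Prop) n (x : nat -> F) :
  (1 <= N <= n)%nat -> (n = 1 \/ 3 <= n)%nat ->
  (forall i, (i < N)%nat -> x i = a i) ->
  (forall i, (i < n)%nat -> K (x i)) ->
  (forall i j, (i < n)%nat -> (j < n)%nat -> x i = x j -> i = j) ->
  (forall x y, S x y -> K y) -> WNQ K K S ->
  exists lam, in_simplex_std N lam /\ S (bary N a lam) (bary N a lam).
Proof.
  intros HNn Hn Hxa Hx Hdist HSK HW.
  destruct (HW n x ltac:(lia) Hx Hdist) as [y [g [Hy [Hg [Hsimp [_ [_ Hq]]]]]]].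
  assert (Hgfix := simplex_map_fixes n g Hn (fun i Hi => proj2 (proj2 (Hg i Hi))) Hsimp).
  assert (Hcoords : forall i, exists q, (i < N)%nat -> in_simplex_std N q /\ y i = bary N a q).
  { intro i. destruct (Nat.lt_ge_cases i N) as [Hi|Hi].
    - destruct (proj1 (HK (y i)) (HSK _ _ (Hy i ltac:(lia)))) as [q Hyq]. exists q; auto.
    - exists (fun _ => 0). intro; lia. }
  destruct (functional_choice _ Hcoords) as [q Hqy].
  destruct (stationary_exists N q) as [lam [Hlam Hstat]]; [lia| |].
  { split; intros i; intros; apply Hqy; auto. }
  set (lamE := fun i => if Nat.ltb i N then lam i else 0).
  assert (HlamE_lo : forall i, (i < N)%nat -> lamE i = lam i).
  { intros i Hi. unfold lamE. rewrite (proj2 (Nat.ltb_lt _ _) Hi). reflexivity. }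
  assert (HlamE_hi : forall i, (N <= i)%nat -> lamE i = 0).
  { intros i Hi. unfold lamE. rewrite (proj2 (Nat.ltb_ge _ _) Hi). reflexivity. }
  assert (HlamE : in_simplex_std n lamE).
  { split.
    - intros i _. destruct (Nat.lt_ge_cases i N); [rewrite HlamE_lo by auto; apply Hlam; auto|].
      rewrite HlamE_hi by auto. lra.
    - rewrite (rsum_trunc N) by (lia || (intros; apply HlamE_hi; lia)).
      rewrite (rsum_ext _ _ lam) by auto. apply Hlam. }
  assert (Hsum : forall f : nat -> F,
             vsum n (fun i => vscal (lamE i) (f i)) = vsum N (fun i => vscal (lam i) (f i))).
  { intro f. rewrite (vsum_trunc N) by (lia || (intros; rewrite HlamE_hi by lia; apply vscal_0l)).
    apply vsum_ext. intros i Hi. rewrite HlamE_lo; auto. }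
  exists lam. split; [exact Hlam|].
  specialize (Hq lamE HlamE).
  rewrite (vsum_ext n (fun i => vscal (g i (lamE i)) (y i)) (fun i => vscal (lamE i) (y i))),
    !Hsum in Hq
    by (intros i Hi; cbn beta; rewrite (Hgfix lamE HlamE i Hi); reflexivity).
  replace (vsum N (fun i => vscal (lam i) (x i))) with (bary N a lam) in Hq
    by (apply vsum_ext; intros; rewrite Hxa; auto).
  replace (vsum N (fun i => vscal (lam i) (y i))) with (bary N a lam) in Hq; [exact Hq|].
  (* sum_i lam_i p(q_i) = p(lam Q) = p(lam) by stationarity *)
  rewrite (vsum_ext N _ (fun i => vscal (lam i) (bary N a (q i)))) by (intros i Hi; cbn beta; rewrite <- (proj2 (Hqy i Hi)); reflexivity).
  unfold bary. rewrite vsum_swap. apply vsum_ext. intros j Hj. rewrite <- Hstat; auto.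
Qed.

(** For every neighbourhood V of 0 some point p(lam) lies in T(p(lam)) + V.
    The points used are the vertices, plus the midpoint of a_0 a_1 when
    N >= 2 (so that there are at least three of them). *)
Lemma approx_fixed_point (T : F -> F -> Prop) V :
  aff_indep N a -> (1 <= N)%nat -> star_WNQ K K T -> nbhd0 V ->
  exists lam, in_simplex_std N lam /\ T_V K T V (bary N a lam) (bary N a lam).
Proof.
  intros Hind HN HW HV.
  assert (HVK : forall x y, T_V K T V x y -> K y) by (intros x y [Ky _]; exact Ky).
  destruct (Nat.eq_dec N 1) as [E1|E1].
  - apply (configuration_fixed_point _ N a); auto; try lia.
    intros; apply vertex_in_simplex; auto.
  - apply (configuration_fixed_point _ (S N) (with_midpoint N a)); auto; try lia.
    + intros i Hi. unfold with_midpoint. rewrite (proj2 (Nat.ltb_lt _ _) Hi). reflexivity.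
    + intros i Hi. unfold with_midpoint. destruct (Nat.ltb_spec i N).
      * apply vertex_in_simplex; auto.
      * apply HK. exists midpoint01. split; [apply midpoint01_simplex; lia | reflexivity].
    + apply with_midpoint_distinct; auto; lia.
Qed.

End ApproximateFixedPoints.

(** ** Separation away from closure-fixed points *)

Section Separation.
Variables (F : TVS) (N : nat) (a : nat -> F) (K : F -> Prop) (T : F -> F -> Prop).
Hypothesis HK : forall x, K x <-> exists lam, in_simplex_std N lam /\ x = bary N a lam.

Definition separated (A : (nat -> R) -> Prop) : Prop :=
  exists O, vopen O /\ O vzero /\
    forall mu, A mu -> in_simplex_std N mu -> ~ T_V K T O (bary N a mu) (bary N a mu).

Lemma separated_ideal : set_ideal separated.
Proof.
  split; [|split].
  - exists (fun _ => True). split; [apply vopen_full | split; [exact I | tauto]].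
  - intros A B HAB [O [HO [O0 HB]]]. exists O. split; [|split]; auto.
  - intros A B [O1 [HO1 [O10 HA]]] [O2 [HO2 [O20 HB]]].
    exists (fun z => O1 z /\ O2 z). split; [apply vopen_inter; auto | split; [auto|]].
    intros mu [Hmu|Hmu] Hs [Kp [t [v [Ht [[Ov1 Ov2] E]]]]].
    + apply (HA mu Hmu Hs). split; [|exists t, v]; auto.
    + apply (HB mu Hmu Hs). split; [|exists t, v]; auto.
Qed.

Lemma separated_near_nonfixed lam : in_simplex_std N lam ->
  ~ in_closure_graph K K T (bary N a lam) (bary N a lam) ->
  exists r, 0 < r /\ separated (fun mu => cube N mu /\ ballN N lam r mu).
Proof.
  intros Hlam Hnot. set (xs := bary N a lam).
  assert (Kxs : K xs) by (apply HK; exists lam; auto).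
  assert (Hsep : exists U W, vopen U /\ U xs /\ vopen W /\ W xs /\
                   forall x' y', K x' -> T x' y' -> U x' -> W y' -> False).
  { apply NNPP; intro Hn. apply Hnot. split; [exact Kxs | split; [exact Kxs|]].
    intros U W HU Ux HW Wx. apply NNPP; intro Hn2. apply Hn. exists U, W.
    repeat split; auto. intros x' y' Kx' Txy Ux' Wy'. apply Hn2. exists x', y'. auto. }
  destruct Hsep as [U [W [HU [Ux [HW [Wx Hsep]]]]]].
  destruct (shifted_nbhd xs W HW Wx) as [A [O [HA [Ax [HO [O0 HAO]]]]]].
  destruct (bary_continuous N a lam (fun z => U z /\ A z) (vopen_inter _ _ HU HA) (conj Ux Ax))
    as [r [Hr Hnear]].
  exists r. split; [exact Hr|]. exists O. split; [exact HO | split; [exact O0|]].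
  intros mu [_ Hball] Hmu [Kp [t [v [Ht [Ov E]]]]].
  destruct (Hnear mu Hball) as [Up Ap].
  apply (Hsep (bary N a mu) t); auto.
  rewrite (vadd_solve_l _ _ _ E). apply HAO; auto.
Qed.

Lemma separated_off_simplex lam : rsum N lam <> 1 ->
  exists r, 0 < r /\ separated (fun mu => cube N mu /\ ballN N lam r mu).
Proof.
  intros Hs. set (e := Rabs (rsum N lam - 1)).
  assert (He : 0 < e) by (apply Rabs_pos_lt; lra).
  assert (HNp : 0 < INR N + 1) by (pose proof (pos_INR N); lra).
  exists (e / (INR N + 1)). split; [apply Rdiv_lt_0_compat; lra|].
  exists (fun _ => True). split; [apply vopen_full | split; [exact I|]].
  intros mu [_ Hball] [_ Hsum] _.
  pose proof (rsum_close N lam mu _ Hball) as Hcl. rewrite Hsum in Hcl.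
  replace (1 - rsum N lam) with (- (rsum N lam - 1)) in Hcl by ring.
  rewrite Rabs_Ropp in Hcl. fold e in Hcl.
  assert (INR N * (e / (INR N + 1)) < e).
  { apply (Rmult_lt_reg_r (INR N + 1)); auto. field_simplify; lra. }
  lra.
Qed.

Lemma separated_locally :
  ~ (exists xs, K xs /\ in_closure_graph K K T xs xs) ->
  forall lam, cube N lam -> exists r, 0 < r /\ separated (fun mu => cube N mu /\ ballN N lam r mu).
Proof.
  intros Hno lam Hcube. destruct (Req_dec (rsum N lam) 1) as [Hs|Hs].
  - assert (Hlam : in_simplex_std N lam) by (split; [intros i Hi; apply Hcube | ]; auto).
    apply separated_near_nonfixed; auto.
    intro Hfix. apply Hno. exists (bary N a lam). split; [apply HK; exists lam|]; auto.
  - apply separated_off_simplex; auto.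
Qed.

End Separation.

Theorem theorem7 (F : TVS) (K : F -> Prop) (T : F -> F -> Prop) :
  is_simplex K ->
  (exists x, K x) ->
  (forall x y, K x -> T x y -> K y) ->
  star_WNQ K K T ->
  exists xs, K xs /\ in_closure_graph K K T xs xs.
Proof.
  intros [N [a [Hind HK]]] [x0 Kx0] _ HW.
  assert (HN : (1 <= N)%nat).
  { destruct N; [|lia]. apply HK in Kx0. destruct Kx0 as [lam [[_ H] _]]. simpl in H. lra. }
  apply NNPP; intro Hno.
  destruct (cube_local_to_global N _ (separated_ideal F N a K T)
              (separated_locally F N a K T HK Hno)) as [O [HO [O0 Hsep]]].
  destruct (approx_fixed_point F N a K HK T O Hind HN HW) as [lam [Hlam Hfix]].
  { exists O. auto. }
  apply (Hsep lam); auto.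
  intros i Hi. apply (simplex_coord_le1 N); auto.
Qed.
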